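(* Let $(M,P,g)$ be a 4-dimensional Riemannian almost product manifold with $\operatorname{tr}P=0$. A curvature-like tensor $L$ on $M$ is a Riemannian $P$-tensor if and only if $$L=\frac{1}{8}\left\{\tau(L)(\pi_1+\pi_2)+\tau^*(L)\pi_3\right\}.$$
   Context: A Riemannian almost product manifold $(M,P,g)$: $M$ smooth, $P$ a $(1,1)$-tensor field with $P^2=\mathrm{id}$, $g$ Riemannian with $g(Px,Py)=g(x,y)$. A curvature-like tensor is a $(0,4)$-tensor $L$ with $L(x,y,z,w)=-L(y,x,z,w)=-L(x,y,w,z)$ and $L(x,y,z,w)+L(y,z,x,w)+L(z,x,y,w)=0$; it is a Riemannian $P$-tensor if moreover $L(x,y,Pz,Pw)=L(x,y,z,w)$. Put $\widetilde g(x,y)=g(x,Py)$. For a $(0,2)$-tensor $S$ let $\psi_1(S)(x,y,z,w)=g(y,z)S(x,w)-g(x,z)S(y,w)+S(y,z)g(x,w)-S(x,z)g(y,w)$ and $\psi_2(S)(x,y,z,w)=\psi_1(S)(x,y,Pz,Pw)$; set $\pi_1=\tfrac12\psi_1(g)$, $\pi_2=\tfrac12\psi_2(g)$, $\pi_3=\psi_1(\widetilde g)$. For a basis $\{e_i\}$ with $g^{ij}$ the inverse of $(g(e_i,e_j))$: $\rho(L)(y,z)=\sum g^{ij}L(e_i,y,z,e_j)$, $\tau(L)=\sum g^{ij}\rho(L)(e_i,e_j)$, $\rho^*(L)(y,z)=\sum g^{ij}L(e_i,y,z,Pe_j)$, $\tau^*(L)=\sum g^{ij}\rho^*(L)(e_i,e_j)$.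 *)

(* Pointwise (tangent-space) linear-algebra model of a
   Riemannian almost product manifold: vectors are row vectors 'rV[R]_n,
   the metric is a matrix G with g(x,y) = x G y^T, P acts by x |-> x *m P. *)
From HB Require Import structures.
From mathcomp Require Import all_boot all_order all_algebra.
Set Implicit Arguments. Unset Strict Implicit. Unset Printing Implicit Defensive.
Import Order.TTheory GRing.Theory Num.Theory.
Local Open Scope ring_scope.

Section Defs.
Variables (R : realFieldType) (n : nat).
Notation V := 'rV[R]_n.

Definition gform (G : 'M[R]_n) (x y : V) : R := (x *m G *m y^T) 0 0.
Definition gtilde (G P : 'M[R]_n) (x y : V) : R := gform G x (y *m P).
Definition ebasis (i : 'I_n) : V := delta_mx 0 i.

Definition almost_product (G P : 'M[R]_n) : Prop :=
  [/\ G^T = G,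
      (forall x : V, x != 0 -> 0 < gform G x x),
      P *m P = 1%:M
    & forall x y : V, gform G (x *m P) (y *m P) = gform G x y].

Definition tensor4 := V -> V -> V -> V -> R.

Definition multilinear4 (L : tensor4) : Prop :=
  [/\ (forall a x x' y z w, L (a *: x + x') y z w = a * L x y z w + L x' y z w),
      (forall a x y y' z w, L x (a *: y + y') z w = a * L x y z w + L x y' z w),
      (forall a x y z z' w, L x y (a *: z + z') w = a * L x y z w + L x y z' w)
    & (forall a x y z w w', L x y z (a *: w + w') = a * L x y z w + L x y z w')].

Definition curvature_like (L : tensor4) : Prop :=
  [/\ multilinear4 L,
      (forall x y z w, L x y z w = - L y x z w),
      (forall x y z w, L x y z w = - L x y w z)
    & (forall x y z w, L x y z w + L y z x w + L z x y w = 0)].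

Definition riemannian_P_tensor (P : 'M[R]_n) (L : tensor4) : Prop :=
  curvature_like L /\ forall x y z w, L x y (z *m P) (w *m P) = L x y z w.

Definition psi1 (G : 'M[R]_n) (S : V -> V -> R) : tensor4 :=
  fun x y z w => gform G y z * S x w - gform G x z * S y w
                 + S y z * gform G x w - S x z * gform G y w.
Definition psi2 (G P : 'M[R]_n) (S : V -> V -> R) : tensor4 :=
  fun x y z w => psi1 G S x y (z *m P) (w *m P).

Definition pi1 (G : 'M[R]_n) : tensor4 :=
  fun x y z w => 2%:R^-1 * psi1 G (gform G) x y z w.
Definition pi2 (G P : 'M[R]_n) : tensor4 :=
  fun x y z w => 2%:R^-1 * psi2 G P (gform G) x y z w.
Definition pi3 (G P : 'M[R]_n) : tensor4 := psi1 G (gtilde G P).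

Definition rho (G : 'M[R]_n) (L : tensor4) (y z : V) : R :=
  \sum_(i < n) \sum_(j < n) invmx G i j * L (ebasis i) y z (ebasis j).
Definition tau (G : 'M[R]_n) (L : tensor4) : R :=
  \sum_(i < n) \sum_(j < n) invmx G i j * rho G L (ebasis i) (ebasis j).
Definition rhostar (G P : 'M[R]_n) (L : tensor4) (y z : V) : R :=
  \sum_(i < n) \sum_(j < n) invmx G i j * L (ebasis i) y z (ebasis j *m P).
Definition taustar (G P : 'M[R]_n) (L : tensor4) : R :=
  \sum_(i < n) \sum_(j < n) invmx G i j * rhostar G P L (ebasis i) (ebasis j).

End Defs.

(* All three tensors [pi_i] are sums
   of terms [kn A B] (half Kulkarni-Nomizu products of Gram matrices) built
   from [g] and [g~ = g(., P .)], whose contractions with [g^-1] are traces;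
   with [tr P = 0] this gives [tau(pi1 + pi2) = n (n - 2)], [tau(pi3) = 0],
   and twisting the last slot by [P] swaps [pi1 + pi2] and [pi3].  Hence the
   coefficients of [L = a (pi1 + pi2) + b pi3] are read off from [tau(L)] and
   [tau*(L)], and such combinations are P-invariant (the converse direction).
   For the direct one, split [V] into the eigenspaces of [P] via the
   projectors [(1 +- P)/2]: a Riemannian P-tensor has no mixed components
   (P-invariance, pair symmetry, Bianchi), each eigenspace is a plane when
   [n = 4], and on a plane every pairwise skew tensor is a multiple of [pi1],
   whose restrictions to the two planes are [(pi1 + pi2 +- pi3)/4]. *)
From HB Require Import structures.
From mathcomp Require Import all_boot all_order all_algebra.
From mathcomp Require Import ring lra.
Import Order.TTheory GRing.Theory Num.Theory.
Local Open Scope ring_scope.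
Set Implicit Arguments. Unset Strict Implicit. Unset Printing Implicit Defensive.

Section Forms.
Variables (R : realFieldType) (n : nat).
Implicit Types (A B : 'M[R]_n) (x y z w : 'rV[R]_n).

Lemma gform_ee A i j : gform A (ebasis R i) (ebasis R j) = A i j.
Proof. by rewrite /gform /ebasis -rowE trmx_delta -colE !mxE. Qed.

Lemma gform_el A i y : gform A (ebasis R i) y = (A *m y^T) i 0.
Proof. by rewrite /gform /ebasis -mulmxA -rowE mxE. Qed.

Lemma gform_er A x j : gform A x (ebasis R j) = (x *m A) 0 j.
Proof. by rewrite /gform /ebasis trmx_delta -colE mxE. Qed.

Lemma gformDl A a x x' y :
  gform A (a *: x + x') y = a * gform A x y + gform A x' y.
Proof. by rewrite /gform !mulmxDl -!scalemxAl !mxE. Qed.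

Lemma gformDr A a x y y' :
  gform A x (a *: y + y') = a * gform A x y + gform A x y'.
Proof. by rewrite /gform linearD linearZ /= mulmxDr -!scalemxAr !mxE. Qed.

Lemma gformZl A a x y : gform A (a *: x) y = a * gform A x y.
Proof. by rewrite /gform -!scalemxAl mxE. Qed.

Lemma gformZr A a x y : gform A x (a *: y) = a * gform A x y.
Proof. by rewrite /gform linearZ /= -scalemxAr mxE. Qed.

Lemma gformDm a A B x y : gform (a *: A + B) x y = a * gform A x y + gform B x y.
Proof. by rewrite /gform mulmxDr mulmxDl -!scalemxAr -scalemxAl !mxE. Qed.

Lemma gformBm a A B x y : gform (a *: A - B) x y = a * gform A x y - gform B x y.
Proof. by rewrite /gform mulmxBr mulmxBl -scalemxAr -scalemxAl !mxE. Qed.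

Lemma gformZm a A x y : gform (a *: A) x y = a * gform A x y.
Proof. by rewrite /gform -scalemxAr -scalemxAl mxE. Qed.

Lemma gform_mull A B x y : gform A (x *m B) y = gform (B *m A) x y.
Proof. by rewrite /gform !mulmxA. Qed.

Lemma gform_mulr A B x y : gform A x (y *m B) = gform (A *m B^T) x y.
Proof. by rewrite /gform trmx_mul !mulmxA. Qed.

Lemma gform_sym A x y : A^T = A -> gform A x y = gform A y x.
Proof.
move=> symA; rewrite /gform -[in LHS](trmxK (x *m A *m y^T)) mxE.
by rewrite !trmx_mul trmxK symA mulmxA.
Qed.

(* Half of the Kulkarni-Nomizu product of the bilinear forms of [A] and [B];
   all the tensors pi_1, pi_2, pi_3 are sums of such terms. *)
Definition kn A B : tensor4 R n :=
  fun x y z w => gform A y z * gform B x w - gform A x z * gform B y w.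

Lemma kn_lastP A B P x y z w : kn A B x y z (w *m P) = kn A (B *m P^T) x y z w.
Proof. by rewrite /kn !gform_mulr. Qed.

Lemma kn_PP A B P x y z w :
  kn A B x y (z *m P) (w *m P) = kn (A *m P^T) (B *m P^T) x y z w.
Proof. by rewrite /kn !gform_mulr. Qed.

Lemma pi1_kn G x y z w : pi1 G x y z w = kn G G x y z w.
Proof. by rewrite /pi1 /psi1 /kn; field. Qed.

Lemma pi2_kn G P x y z w : pi2 G P x y z w = kn (G *m P^T) (G *m P^T) x y z w.
Proof. by rewrite /pi2 /psi2 /psi1 /kn !gform_mulr; field. Qed.

Lemma pi3_kn G P x y z w :
  pi3 G P x y z w = kn G (G *m P^T) x y z w + kn (G *m P^T) G x y z w.
Proof. by rewrite /pi3 /psi1 /gtilde /kn !gform_mulr; ring. Qed.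

Definition pairwise_skew (T : tensor4 R n) : Prop :=
  [/\ multilinear4 T,
      (forall x y z w, T x y z w = - T y x z w)
    & (forall x y z w, T x y z w = - T x y w z)].

Lemma curvature_like_pairwise_skew (T : tensor4 R n) :
  curvature_like T -> pairwise_skew T.
Proof. by case. Qed.

Lemma pi1_pairwise_skew G : pairwise_skew (pi1 G).
Proof. by split; [split|..] => *; rewrite /pi1 /psi1 ?(gformDl, gformDr); ring. Qed.

End Forms.

Section Multilinear.
Variables (R : realFieldType) (n : nat).

Lemma affine_comb_linear (f : 'rV[R]_n -> R) :
  (forall a x x', f (a *: x + x') = a * f x + f x') ->
  (forall x x', f (x + x') = f x + f x') /\ (forall a x, f (a *: x) = a * f x).
Proof.
move=> hf; have f0 : f 0 = 0.
  by have := hf 1 0 0; rewrite scale1r addr0 mul1r => e; lra.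
split=> [x x'|a x]; first by have := hf 1 x x'; rewrite scale1r mul1r.
by have := hf a x 0; rewrite addr0 f0 addr0.
Qed.

Variables (T : tensor4 R n) (mlT : multilinear4 T).

Lemma tensorD1 x x' y z w : T (x + x') y z w = T x y z w + T x' y z w.
Proof.
by case: mlT => h _ _ _; case: (affine_comb_linear (fun a x x' => h a x x' y z w)).
Qed.

Lemma tensorZ1 a x y z w : T (a *: x) y z w = a * T x y z w.
Proof.
by case: mlT => h _ _ _; case: (affine_comb_linear (fun a x x' => h a x x' y z w)).
Qed.

Lemma tensorD2 x y y' z w : T x (y + y') z w = T x y z w + T x y' z w.
Proof.
by case: mlT => _ h _ _; case: (affine_comb_linear (fun a y y' => h a x y y' z w)).
Qed.

Lemma tensorZ2 a x y z w : T x (a *: y) z w = a * T x y z w.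
Proof.
by case: mlT => _ h _ _; case: (affine_comb_linear (fun a y y' => h a x y y' z w)).
Qed.

Lemma tensorD3 x y z z' w : T x y (z + z') w = T x y z w + T x y z' w.
Proof.
by case: mlT => _ _ h _; case: (affine_comb_linear (fun a z z' => h a x y z z' w)).
Qed.

Lemma tensorZ3 a x y z w : T x y (a *: z) w = a * T x y z w.
Proof.
by case: mlT => _ _ h _; case: (affine_comb_linear (fun a z z' => h a x y z z' w)).
Qed.

Lemma tensorD4 x y z w w' : T x y z (w + w') = T x y z w + T x y z w'.
Proof.
by case: mlT => _ _ _ h; case: (affine_comb_linear (fun a w w' => h a x y z w w')).
Qed.

Lemma tensorZ4 a x y z w : T x y z (a *: w) = a * T x y z w.
Proof.
by case: mlT => _ _ _ h; case: (affine_comb_linear (fun a w w' => h a x y z w w')).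
Qed.

End Multilinear.

Section PairwiseSkew.
Variables (R : realFieldType) (n : nat).
Implicit Types (T : tensor4 R n) (u v : 'rV[R]_n).

Lemma pairwise_skew_span2 T u v a0 a1 b0 b1 c0 c1 d0 d1 : pairwise_skew T ->
  T (a0 *: u + a1 *: v) (b0 *: u + b1 *: v) (c0 *: u + c1 *: v) (d0 *: u + d1 *: v)
  = (a0 * b1 - a1 * b0) * (c0 * d1 - c1 * d0) * T u v u v.
Proof.
case=> mlT skew12 skew34.
have T0a x z w : T x x z w = 0 by have := skew12 x x z w; lra.
have T0b x y z : T x y z z = 0 by have := skew34 x y z z; lra.
rewrite !(tensorD1 mlT) !(tensorD2 mlT) !(tensorD3 mlT) !(tensorD4 mlT).
rewrite !(tensorZ1 mlT) !(tensorZ2 mlT) !(tensorZ3 mlT) !(tensorZ4 mlT) !T0a !T0b.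
rewrite [T u v v u]skew34 [T v u u v]skew12 [T v u v u]skew12 [T u v v u]skew34.
ring.
Qed.

Lemma pairwise_skew_proportional T S u v : pairwise_skew T -> pairwise_skew S ->
  S u v u v != 0 ->
  forall a0 a1 b0 b1 c0 c1 d0 d1,
  T (a0 *: u + a1 *: v) (b0 *: u + b1 *: v) (c0 *: u + c1 *: v) (d0 *: u + d1 *: v)
  = T u v u v / S u v u v *
    S (a0 *: u + a1 *: v) (b0 *: u + b1 *: v) (c0 *: u + c1 *: v) (d0 *: u + d1 *: v).
Proof.
by move=> skT skS Snz *; rewrite !pairwise_skew_span2 //; field.
Qed.

(* The pair symmetry [L x y z w = L z w x y] of curvature-like tensors,
   a linear consequence of the two skew symmetries and the Bianchi identity. *)
Lemma curvature_like_pair_sym (L : tensor4 R n) : curvature_like L ->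
  forall x y z w, L x y z w = L z w x y.
Proof.
case=> _ skew12 skew34 bianchi x y z w.
have := bianchi x y z w; have := bianchi y z w x;
have := bianchi z w x y; have := bianchi w x y z.
have := skew12 y z x w; have := skew12 z x y w;
have := skew12 z w y x; have := skew12 w y z x;
have := skew12 w x z y; have := skew12 x z w y;
have := skew12 x y w z; have := skew12 y w x z.
have := skew34 y z x w; have := skew34 z x y w;
have := skew34 z w y x; have := skew34 w y z x;
have := skew34 w x z y; have := skew34 x z w y;
have := skew34 x y w z; have := skew34 y w x z.
have := skew34 x y z w; have := skew34 z w x y.
have := skew12 x y z w; have := skew12 z w x y.
lra.
Qed.

End PairwiseSkew.

Section IdempotentRank.
Variables (R : realFieldType) (n : nat).

Lemma idempotent_factor_inner r (E : 'M[R]_n) (C : 'M[R]_(n, r))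
    (B : 'M[R]_(r, n)) C' B' :
  E *m E = E -> C *m B = E -> C' *m C = 1%:M -> B *m B' = 1%:M ->
  B *m C = 1%:M.
Proof.
move=> EE CB C'C BB'.
transitivity (C' *m E *m E *m B').
  by rewrite -CB !mulmxA C'C mul1mx -!mulmxA BB' mulmx1.
by rewrite -(mulmxA C' E E) EE -CB !mulmxA C'C mul1mx BB'.
Qed.

Lemma idempotent_trace_rank (E : 'M[R]_n) : E *m E = E -> \tr E = (\rank E)%:R.
Proof.
move=> EE; have CB := mulmx_base E.
case/row_fullP: (col_base_full E) => C' C'C.
case/row_freeP: (row_base_free E) => B' BB'.
by rewrite -{1}CB mxtrace_mulC (idempotent_factor_inner EE CB C'C BB') mxtrace1.
Qed.

Lemma rank2_basis (E : 'M[R]_n) : \rank E = 2%N ->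
  exists r0 r1 : 'rV[R]_n,
    (forall a b, a *: r0 + b *: r1 = 0 -> a = 0 /\ b = 0)
    /\ (forall v, (v <= E)%MS -> exists a b, v = a *: r0 + b *: r1).
Proof.
move=> rkE.
move: (row_base E) (row_base_free E) (eq_row_base E) rkE.
move: (\rank E) => r B freeB eqB rkE; subst r.
have rowsB (u : 'rV[R]_2) : u *m B = u 0 0 *: row 0 B + u 0 1 *: row 1 B.
  rewrite mulmx_sum_row big_ord_recl big_ord1.
  have -> : lift ord0 ord0 = 1 :> 'I_2 by apply: val_inj.
  by have -> : ord0 = 0 :> 'I_2 by apply: val_inj.
exists (row 0 B), (row 1 B); split.
- move=> a b ab0.
  pose u : 'rV[R]_2 := \row_(i < 2) (if i == 0 then a else b).
  have : u *m B = 0 by rewrite rowsB !mxE.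
  move/eqP; rewrite mulmx_free_eq0 // => /eqP u0.
  have := congr1 (fun m : 'rV[R]_2 => m 0 0) u0.
  have := congr1 (fun m : 'rV[R]_2 => m 0 1) u0.
  by rewrite !mxE.
- move=> v; rewrite -eqB => /submxP [D ->].
  by exists (D 0 0), (D 0 1); rewrite rowsB.
Qed.

End IdempotentRank.

Section PositiveDefinite.
Variables (R : realFieldType) (n : nat) (G : 'M[R]_n).
Hypothesis G_sym : G^T = G.
Hypothesis G_pos : forall x : 'rV[R]_n, x != 0 -> 0 < gform G x x.

Lemma G_unit : G \in unitmx.
Proof.
rewrite -row_free_unit; apply: inj_row_free => v vG0; apply/eqP; apply: contraT.
by move=> /G_pos; rewrite /gform vG0 mul0mx mxE ltxx.
Qed.

(* Gram's inequality: for independent [u, v] the Gram determinant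
   [g(u,u) g(v,v) - g(u,v)^2 = - pi1 G u v u v] is positive. *)
Lemma pi1_indep_neq0 u v :
  (forall a b, a *: u + b *: v = 0 -> a = 0 /\ b = 0) -> pi1 G u v u v != 0.
Proof.
move=> indep.
have u_neq0 : u != 0.
  apply/eqP => u0; have [] := indep 1 0; last by move/eqP; rewrite oner_eq0.
  by rewrite u0 scaler0 scale0r addr0.
set a := gform G u v; set b := gform G u u.
have b_gt0 : 0 < b := G_pos u_neq0.
set v' := (- a) *: u + b *: v.
have v'_neq0 : v' != 0.
  by apply/eqP => /indep [_ b0]; move: b_gt0; rewrite b0 ltxx.
have gv' : gform G v' v' = - b * pi1 G u v u v.
  rewrite /v' pi1_kn /kn !(gformDl, gformDr, gformZl, gformZr).
  by rewrite (gform_sym v u G_sym) -/a -/b; ring.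
apply/eqP => pi0; by move: (G_pos v'_neq0); rewrite gv' pi0 mulr0 ltxx.
Qed.

Lemma pairwise_skew_rank2 (L : tensor4 R n) (E : 'M[R]_n) :
  pairwise_skew L -> \rank E = 2%N ->
  exists K, forall x y z w,
    L (x *m E) (y *m E) (z *m E) (w *m E)
    = K * pi1 G (x *m E) (y *m E) (z *m E) (w *m E).
Proof.
move=> skL rkE; have [u [v [indep spanE]]] := rank2_basis rkE.
exists (L u v u v / pi1 G u v u v) => x y z w.
have [ax [bx ->]] := spanE _ (submxMl x E).
have [ay [b_y ->]] := spanE _ (submxMl y E).
have [az [bz ->]] := spanE _ (submxMl z E).
have [aw [bw ->]] := spanE _ (submxMl w E).
exact: (pairwise_skew_proportional skL (pi1_pairwise_skew G) (pi1_indep_neq0 indep)).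
Qed.

End PositiveDefinite.

Section Contraction.
Variables (R : realFieldType) (n : nat) (G : 'M[R]_n).
Local Notation M := (invmx G).

(* Contraction of the bilinear form of [X] with the inverse metric. *)
Definition gtrace (X : 'M[R]_n) : R := \tr (M *m X^T).

Lemma sum_gtrace (X : 'M[R]_n) : \sum_(i < n) \sum_(j < n) M i j * X i j = gtrace X.
Proof.
rewrite /gtrace /mxtrace; apply: eq_bigr => i _; rewrite mxE.
by apply: eq_bigr => j _; rewrite mxE.
Qed.

Lemma sum_bilinear (A B : 'M[R]_n) y z :
  \sum_(i < n) \sum_(j < n) M i j * ((A *m z^T) i 0 * (y *m B) 0 j)
  = gform (B *m M^T *m A) y z.
Proof.
rewrite /gform !mulmxA -(mulmxA _ A).
move: (A *m z^T) (y *m B) => c u.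
rewrite [RHS]mxE; apply: eq_bigr => i _.
rewrite [X in _ = X * _]mxE mulr_suml; apply: eq_bigr => j _; rewrite !mxE.
by ring.
Qed.

Lemma rho_kn (A B : 'M[R]_n) y z :
  rho G (kn A B) y z = gform (gtrace B *: A - B *m M^T *m A) y z.
Proof.
rewrite gformBm -sum_gtrace -sum_bilinear /rho /kn mulr_suml -sumrB.
apply: eq_bigr => i _; rewrite mulr_suml -sumrB; apply: eq_bigr => j _.
by rewrite gform_ee gform_el gform_er; ring.
Qed.

Lemma tau_kn (A B : 'M[R]_n) :
  tau G (kn A B) = gtrace B * gtrace A - gtrace (B *m M^T *m A).
Proof.
have -> : tau G (kn A B) = gtrace (gtrace B *: A - B *m M^T *m A).
  rewrite -sum_gtrace; apply: eq_bigr => i _; apply: eq_bigr => j _.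
  by rewrite rho_kn gform_ee.
by rewrite /gtrace linearB linearZ /= mulmxBr -scalemxAr linearB linearZ.
Qed.

Lemma rho_lincomb (L T1 T2 : tensor4 R n) a b :
  (forall x y z w, L x y z w = a * T1 x y z w + b * T2 x y z w) ->
  forall y z, rho G L y z = a * rho G T1 y z + b * rho G T2 y z.
Proof.
move=> eqL y z; rewrite /rho !mulr_sumr -big_split; apply: eq_bigr => i _.
rewrite !mulr_sumr -big_split; apply: eq_bigr => j _.
by rewrite eqL mulrDr (mulrCA _ a) (mulrCA _ b).
Qed.

Lemma tau_lincomb (L T1 T2 : tensor4 R n) a b :
  (forall x y z w, L x y z w = a * T1 x y z w + b * T2 x y z w) ->
  tau G L = a * tau G T1 + b * tau G T2.
Proof.
move=> eqL; rewrite /tau !mulr_sumr -big_split; apply: eq_bigr => i _.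
rewrite !mulr_sumr -big_split; apply: eq_bigr => j _.
by rewrite (rho_lincomb eqL) mulrDr (mulrCA _ a) (mulrCA _ b).
Qed.

Lemma taustarE P (L : tensor4 R n) :
  taustar G P L = tau G (fun x y z w => L x y z (w *m P)).
Proof. by []. Qed.

End Contraction.

Definition pi12 (R : realFieldType) (n : nat) (G P : 'M[R]_n) : tensor4 R n :=
  fun x y z w => pi1 G x y z w + pi2 G P x y z w.

Section AlmostProduct.
Variables (R : realFieldType) (n : nat) (G P : 'M[R]_n).
Hypothesis GP : almost_product G P.
Hypothesis trP : \tr P = 0.

Let G_sym : G^T = G. Proof. by case: GP. Qed.
Let G_pos (x : 'rV[R]_n) : x != 0 -> 0 < gform G x x.
Proof. by case: GP => _ pos _ _; apply: pos. Qed.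
Let PP : P *m P = 1%:M. Proof. by case: GP. Qed.
Let g_Pinv x y : gform G (x *m P) (y *m P) = gform G x y.
Proof. by case: GP => _ _ _; apply. Qed.

Local Notation M := (invmx G).
(* The Gram matrix of the associated metric [g~(x, y) = g(x, P y)]. *)
Local Notation Gt := (G *m P^T).

Lemma PGP : P *m G *m P^T = G.
Proof. by apply/matrixP => i j; rewrite -!gform_ee -gform_mulr -gform_mull g_Pinv. Qed.

Lemma PTPT : P^T *m P^T = 1%:M.
Proof. by rewrite -trmx_mul PP trmx1. Qed.

Lemma PG : P *m G = Gt.
Proof. by rewrite -{2}PGP -mulmxA PTPT mulmx1. Qed.

Lemma Gt_sym : Gt^T = Gt.
Proof. by rewrite trmx_mul trmxK G_sym PG. Qed.

Lemma Gt_PT : Gt *m P^T = G.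
Proof. by rewrite -mulmxA PTPT mulmx1. Qed.

Lemma M_sym : M^T = M.
Proof. by rewrite trmx_inv G_sym. Qed.

Lemma MG : M *m G = 1%:M.
Proof. exact: mulVmx (G_unit G_pos). Qed.

Lemma GM : G *m M = 1%:M.
Proof. exact: mulmxV (G_unit G_pos). Qed.

Lemma gtrace_G : gtrace G G = n%:R.
Proof. by rewrite /gtrace G_sym MG mxtrace1. Qed.

(* [g~] is trace free because [P] is. *)
Lemma gtrace_Gt : gtrace G Gt = 0.
Proof. by rewrite /gtrace Gt_sym mulmxA MG mul1mx mxtrace_tr. Qed.

(* Since [P] is [g]-orthogonal, [g~] has the same norm as [g]. *)
Lemma Gt_M_Gt : Gt *m M *m Gt = G.
Proof. by rewrite -{1}PG -!mulmxA (mulmxA M) MG mul1mx mulmxA PGP. Qed.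

Lemma Gt_M_G : Gt *m M *m G = Gt.
Proof. by rewrite -mulmxA MG mulmx1. Qed.

Lemma tau_pi12 : tau G (pi12 G P) = n%:R * (n%:R - 2%:R).
Proof.
rewrite (@tau_lincomb _ _ _ _ (kn G G) (kn Gt Gt) 1 1); last first.
  by move=> *; rewrite /pi12 pi1_kn pi2_kn !mul1r.
rewrite !tau_kn M_sym gtrace_G gtrace_Gt GM mul1mx.
by rewrite Gt_M_Gt gtrace_G; ring.
Qed.

Lemma tau_pi3 : tau G (pi3 G P) = 0.
Proof.
rewrite (@tau_lincomb _ _ _ _ (kn G Gt) (kn Gt G) 1 1); last first.
  by move=> *; rewrite pi3_kn !mul1r.
by rewrite !tau_kn M_sym gtrace_Gt GM mul1mx Gt_M_G gtrace_Gt; ring.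
Qed.

Lemma pi12_lastP x y z w : pi12 G P x y z (w *m P) = pi3 G P x y z w.
Proof. by rewrite /pi12 pi1_kn pi2_kn pi3_kn !kn_lastP Gt_PT addrC. Qed.

Lemma pi3_lastP x y z w : pi3 G P x y z (w *m P) = pi12 G P x y z w.
Proof. by rewrite /pi12 pi1_kn pi2_kn pi3_kn !kn_lastP Gt_PT. Qed.

Lemma pi12_PP x y z w : pi12 G P x y (z *m P) (w *m P) = pi12 G P x y z w.
Proof. by rewrite /pi12 !pi1_kn !pi2_kn !kn_PP Gt_PT addrC. Qed.

Lemma pi3_PP x y z w : pi3 G P x y (z *m P) (w *m P) = pi3 G P x y z w.
Proof. by rewrite !pi3_kn !kn_PP Gt_PT addrC. Qed.

Lemma pi_comb_coefficients (L : tensor4 R n) a b :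
  (forall x y z w, L x y z w = a * pi12 G P x y z w + b * pi3 G P x y z w) ->
  tau G L = a * (n%:R * (n%:R - 2%:R)) /\
  taustar G P L = b * (n%:R * (n%:R - 2%:R)).
Proof.
move=> eqL; split.
  by rewrite (tau_lincomb G eqL) tau_pi12 tau_pi3; ring.
rewrite taustarE (@tau_lincomb _ _ _ _ (pi3 G P) (pi12 G P) a b).
  by rewrite tau_pi12 tau_pi3; ring.
by move=> x y z w; rewrite eqL pi12_lastP pi3_lastP.
Qed.

Lemma pi_comb_P_invariant (L : tensor4 R n) a b :
  (forall x y z w, L x y z w = a * pi12 G P x y z w + b * pi3 G P x y z w) ->
  forall x y z w, L x y (z *m P) (w *m P) = L x y z w.
Proof. by move=> eqL x y z w; rewrite !eqL pi12_PP pi3_PP. Qed.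

Definition Pplus : 'M[R]_n := 2%:R^-1 *: (1%:M + P).
Definition Pminus : 'M[R]_n := 2%:R^-1 *: (1%:M - P).

Lemma Pplus_P : Pplus *m P = Pplus.
Proof. by rewrite /Pplus -scalemxAl mulmxDl mul1mx PP addrC. Qed.

Lemma Pminus_P : Pminus *m P = - Pminus.
Proof. by rewrite /Pminus -scalemxAl mulmxBl mul1mx PP -scalerN opprB. Qed.

Lemma Pplus_add_Pminus : Pplus + Pminus = 1%:M.
Proof. by apply/matrixP => i j; rewrite /Pplus /Pminus !mxE; field. Qed.

Lemma Pplus_idem : Pplus *m Pplus = Pplus.
Proof.
rewrite {2}/Pplus -scalemxAr mulmxDr mulmx1 Pplus_P.
by apply/matrixP => i j; rewrite !mxE; field.
Qed.

Lemma Pminus_idem : Pminus *m Pminus = Pminus.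
Proof.
rewrite {2}/Pminus -scalemxAr mulmxBr mulmx1 Pminus_P.
by apply/matrixP => i j; rewrite !mxE; field.
Qed.

(* As [P] is trace free, both eigenspaces have half the dimension. *)
Lemma tr_Pplus : \tr Pplus = n%:R / 2%:R.
Proof. by rewrite /Pplus linearZ linearD /= trP mxtrace1 addr0 mulrC. Qed.

Lemma tr_Pminus : \tr Pminus = n%:R / 2%:R.
Proof. by rewrite /Pminus linearZ linearB /= trP mxtrace1 subr0 mulrC. Qed.

Lemma gram_Pplus : Pplus *m G *m Pplus^T = 2%:R^-1 *: G + 2%:R^-1 *: Gt.
Proof.
have -> : Pplus^T = 2%:R^-1 *: (1%:M + P^T).
  by rewrite /Pplus linearZ /= linearD /= trmx1.
rewrite /Pplus -scalemxAr -!scalemxAl mulmxDl mul1mx mulmxDr mulmx1 mulmxDl PGP PG.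
by apply/matrixP => i j; rewrite !mxE; field.
Qed.

Lemma gram_Pminus : Pminus *m G *m Pminus^T = 2%:R^-1 *: G - 2%:R^-1 *: Gt.
Proof.
have -> : Pminus^T = 2%:R^-1 *: (1%:M - P^T).
  by rewrite /Pminus linearZ /= linearB /= trmx1.
rewrite /Pminus -scalemxAr -!scalemxAl mulmxBl mul1mx mulmxBr mulmx1 mulmxBl PGP PG.
by apply/matrixP => i j; rewrite !mxE; field.
Qed.

Lemma pi1_Pplus x y z w :
  pi1 G (x *m Pplus) (y *m Pplus) (z *m Pplus) (w *m Pplus)
  = 4%:R^-1 * (pi12 G P x y z w + pi3 G P x y z w).
Proof.
rewrite /pi12 !pi1_kn pi2_kn pi3_kn /kn !gform_mull !gform_mulr gram_Pplus.
by rewrite !gformDm !gformZm; field.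
Qed.

Lemma pi1_Pminus x y z w :
  pi1 G (x *m Pminus) (y *m Pminus) (z *m Pminus) (w *m Pminus)
  = 4%:R^-1 * (pi12 G P x y z w - pi3 G P x y z w).
Proof.
rewrite /pi12 !pi1_kn pi2_kn pi3_kn /kn !gform_mull !gform_mulr gram_Pminus.
by rewrite !gformBm !gformZm; field.
Qed.

Section PTensor.
Variable L : tensor4 R n.
Hypothesis L_curv : curvature_like L.
Hypothesis L_P : forall x y z w, L x y (z *m P) (w *m P) = L x y z w.

Let L_ml : multilinear4 L. Proof. by case: L_curv. Qed.

Lemma P_tensor_mixed34 x y z w : L x y (z *m Pplus) (w *m Pminus) = 0.
Proof.
have := L_P x y (z *m Pplus) (w *m Pminus).
by rewrite -!mulmxA Pplus_P Pminus_P mulmxN -scaleN1r (tensorZ4 L_ml) => e; lra.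
Qed.

Lemma P_tensor_mixed43 x y z w : L x y (z *m Pminus) (w *m Pplus) = 0.
Proof.
have := L_P x y (z *m Pminus) (w *m Pplus).
by rewrite -!mulmxA Pplus_P Pminus_P mulmxN -scaleN1r (tensorZ3 L_ml) => e; lra.
Qed.

Lemma P_tensor_mixed12 x y z w : L (x *m Pplus) (y *m Pminus) z w = 0.
Proof. by rewrite (curvature_like_pair_sym L_curv) P_tensor_mixed34. Qed.

Lemma P_tensor_mixed21 x y z w : L (x *m Pminus) (y *m Pplus) z w = 0.
Proof. by rewrite (curvature_like_pair_sym L_curv) P_tensor_mixed43. Qed.

Lemma P_tensor_cross x y z w :
  L (x *m Pplus) (y *m Pplus) (z *m Pminus) (w *m Pminus) = 0 /\
  L (x *m Pminus) (y *m Pminus) (z *m Pplus) (w *m Pplus) = 0.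
Proof.
case: L_curv => _ _ _ bianchi; split.
  have := bianchi (x *m Pplus) (y *m Pplus) (z *m Pminus) (w *m Pminus).
  by rewrite P_tensor_mixed12 P_tensor_mixed21 !addr0.
have := bianchi (x *m Pminus) (y *m Pminus) (z *m Pplus) (w *m Pplus).
by rewrite P_tensor_mixed12 P_tensor_mixed21 !addr0.
Qed.

Lemma P_tensor_split x y z w :
  L x y z w = L (x *m Pplus) (y *m Pplus) (z *m Pplus) (w *m Pplus)
              + L (x *m Pminus) (y *m Pminus) (z *m Pminus) (w *m Pminus).
Proof.
have split_vec (u : 'rV[R]_n) : u = u *m Pplus + u *m Pminus.
  by rewrite -mulmxDr Pplus_add_Pminus mulmx1.
rewrite {1}(split_vec x) {1}(split_vec y) {1}(split_vec z) {1}(split_vec w).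
rewrite !(tensorD1 L_ml) !(tensorD2 L_ml) !(tensorD3 L_ml) !(tensorD4 L_ml).
rewrite !(P_tensor_mixed12, P_tensor_mixed21, P_tensor_mixed34, P_tensor_mixed43).
by have [-> ->] := P_tensor_cross x y z w; rewrite !(addr0, add0r).
Qed.

End PTensor.

End AlmostProduct.

Lemma half_projector_rank (R : realFieldType) (E : 'M[R]_4) :
  E *m E = E -> \tr E = 4%:R / 2%:R -> \rank E = 2%N.
Proof.
move=> EE trE; apply/eqP; rewrite -(eqr_nat R) -(idempotent_trace_rank EE) trE.
by apply/eqP; field.
Qed.

(* In dimension four each eigenspace of [P] is a plane, on which a Riemannian
   P-tensor is a multiple of [pi1]; this yields [L = a (pi1 + pi2) + b pi3]. *)
Lemma P_tensor_pi_comb (R : realFieldType) (G P : 'M[R]_4) (L : tensor4 R 4) :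
  almost_product G P -> \tr P = 0 -> riemannian_P_tensor P L ->
  exists a b, forall x y z w,
    L x y z w = a * pi12 G P x y z w + b * pi3 G P x y z w.
Proof.
move=> GP trP [L_curv L_P].
have [G_sym G_pos _ _] := GP.
have skL := curvature_like_pairwise_skew L_curv.
have [Kp Kp_eq] := pairwise_skew_rank2 G_sym G_pos skL
  (half_projector_rank (Pplus_idem GP) (tr_Pplus trP)).
have [Km Km_eq] := pairwise_skew_rank2 G_sym G_pos skL
  (half_projector_rank (Pminus_idem GP) (tr_Pminus trP)).
exists ((Kp + Km) / 4%:R), ((Kp - Km) / 4%:R) => x y z w.
rewrite (P_tensor_split GP L_curv L_P) Kp_eq Km_eq (pi1_Pplus GP) (pi1_Pminus GP).
by field.
Qed.

Theorem theorem3p2 (R : realFieldType) (G P : 'M[R]_4)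
  (hGP : almost_product G P) (htr : \tr P = 0)
  (L : tensor4 R 4) (hL : curvature_like L) :
  riemannian_P_tensor P L <->
  (forall x y z w : 'rV[R]_4,
     L x y z w = 8%:R^-1 * (tau G L * (pi1 G x y z w + pi2 G P x y z w)
                            + taustar G P L * pi3 G P x y z w)).
Proof.
split=> [PL | formula].
- have [a [b eqL]] := P_tensor_pi_comb hGP htr PL.
  have [-> ->] := pi_comb_coefficients hGP htr eqL.
  by move=> x y z w; rewrite eqL /pi12; field.
- split=> //; apply: (pi_comb_P_invariant hGP (a := tau G L / 8%:R)
                                           (b := taustar G P L / 8%:R)).
  by move=> x y z w; rewrite formula /pi12; field.
Qed.
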